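(* Let $p\in\{2,3\}$ and let $\alpha=\frac{P+\sqrt D}{Q}\in\mathbb{Q}_p$, where $P,Q\in\mathbb{Z}$, $Q\neq0$, and $D$ is a non-square integer with $\sqrt D\in\mathbb{Q}_p$ (so $\alpha$ is a quadratic irrational). Then both Algorithm A and Algorithm B (defined in the context) expand $\alpha$ as an ultimately periodic continued fraction, i.e. there exist $N\ge0$ and $k\ge1$ with $b_{n+k}=b_n$ for all $n\ge N$.
   Context: Fix a prime $p$. Let $\mathcal{R}=\{-\frac{p-1}{2},\dots,0,\dots,\frac{p-1}{2}\}$ if $p$ is odd, and $\mathcal{R}=\{0,1\}$ if $p=2$. Every nonzero $\alpha\in\mathbb{Q}_p$ is written uniquely as $\alpha=\sum_{n\ge r}a_np^n$ with $r=v_p(\alpha)$, all $a_n\in\mathcal{R}$, $a_r\neq 0$. Put $s(\alpha)=\sum_{n=r}^{0}a_np^n$ and $t(\alpha)=\sum_{n=r}^{-1}a_np^n$ (empty sums are $0$). For an algebraic number $\alpha\in\mathbb{Q}_p$ whose minimal polynomial over $\mathbb{Q}$ has degree $d$, let $\operatorname{Tr}(\alpha)$ be its trace over $\mathbb{Q}$ and $\operatorname{round}(x)$ the integer nearest to the real number $x$. Define $\bar s(\alpha)=\operatorname{round}\!\left(\frac{\operatorname{Tr}(\alpha)/d-s(\alpha)}{p}\right)p+s(\alpha)$ and $\bar t(\alpha)=\operatorname{round}\!\left(\operatorname{Tr}(\alpha)/d-t(\alpha)\right)+t(\alpha)$. (For $\alpha=\frac{P+\sqrt D}{Q}$ as in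 the claim, $\operatorname{Tr}(\alpha)/d=P/Q$.) An expansion algorithm starts with $\alpha_0=\alpha$; at step $n$ it chooses $b_n$ by a rule; if $\alpha_n=b_n$ it stops, otherwise it sets $\alpha_{n+1}=\frac{1}{\alpha_n-b_n}$ and continues, producing $[b_0,b_1,\dots]=b_0+\cfrac{1}{b_1+\cfrac{1}{b_2+\cdots}}$. Algorithm A: $b_0=\bar s(\alpha_0)$; for $n\ge1$, $b_n=\bar s(\alpha_n)$ if $v_p(\alpha_n)=0$ and $b_n=\bar t(\alpha_n)$ if $v_p(\alpha_n)<0$. Algorithm B: $b_n=\bar s(\alpha_n)$ if $n$ is even and $b_n=\bar t(\alpha_n)$ if $n$ is odd. *)

From HB Require Import structures.
From mathcomp Require Import all_boot all_order all_algebra.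
From Stdlib Require Import ClassicalEpsilon.
Set Implicit Arguments. Unset Strict Implicit. Unset Printing Implicit Defensive.
Import Order.TTheory GRing.Theory Num.Theory.
Local Open Scope ring_scope.

Definition vq (p : nat) (q : rat) : int :=
  (logn p `|numq q|%N)%:Z - (logn p `|denq q|%N)%:Z.

(* v_p(q) >= j, with v_p(0) = +oo *)
Definition padic_ge (p : nat) (j : int) (q : rat) : bool :=
  (q == 0) || (j <= vq p q).

Definition digitR (p : nat) (a : int) : bool :=
  if p == 2%N then (a == 0) || (a == 1) else `|a| * 2 <= (p.-1)%:Z.

(* Elements x + y*sqrt(D) of Q(sqrt D), as pairs (x, y) of rationals. *)
Definition K := (rat * rat)%type.

Definition Ksubq (z : K) (c : rat) : K := (z.1 - c, z.2).
Definition Kinv (D : int) (z : K) : K :=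
  let n := z.1 ^+ 2 - D%:~R * z.2 ^+ 2 in (z.1 / n, - z.2 / n).

(* Tr(z)/d, d the degree of the minimal polynomial of z over Q:
   equals the rational part in both cases (z rational or quadratic) *)
Definition Ktrd (z : K) : rat := z.1.

(* rho : nat -> rat is a p-adic Cauchy sequence converging to a square root
   sigma of D in Q_p; z = (x,y) is then embedded as x + y*sigma, which is
   approximated by x + y * rho k. *)
Definition approx (rho : nat -> rat) (z : K) (k : nat) : rat := z.1 + z.2 * rho k.

Definition eventually (P : nat -> Prop) : Prop :=
  exists k0 : nat, forall k, (k0 <= k)%N -> P k.

(* the image of z in Q_p lies in p^j Z_p *)
Definition Kin_pow (p : nat) (rho : nat -> rat) (j : int) (z : K) : Prop :=
  eventually (fun k => padic_ge p j (approx rho z k)).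

Definition fin_digits (p : nat) (lo : nat) (c : rat) : Prop :=
  exists (N : nat) (a : nat -> int), (forall i, digitR p (a i)) /\
    c = \sum_(lo <= i < N) (a i)%:~R / (p%:R ^+ i).

(* s(z) = sum_{n=r}^{0} a_n p^n : the digit sum over exponents n <= 0,
   characterised as the finite R-digit sum (exponents <= 0) with
   z - s(z) in p Z_p;  t(z) similarly with exponents <= -1 and z - t(z) in Z_p *)
Definition is_s (p : nat) (rho : nat -> rat) (z : K) (c : rat) : Prop :=
  fin_digits p 0 c /\ Kin_pow p rho 1 (Ksubq z c).
Definition is_t (p : nat) (rho : nat -> rat) (z : K) (c : rat) : Prop :=
  fin_digits p 1 c /\ Kin_pow p rho 0 (Ksubq z c).

Definition sK p rho z : rat := epsilon (inhabits 0) (is_s p rho z).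
Definition tK p rho z : rat := epsilon (inhabits 0) (is_t p rho z).

Definition roundq (x : rat) : int := Num.floor (x + 2^-1).

Definition sbar p rho (z : K) : rat :=
  (roundq ((Ktrd z - sK p rho z) / p%:R))%:~R * p%:R + sK p rho z.
Definition tbar p rho (z : K) : rat :=
  (roundq (Ktrd z - tK p rho z))%:~R + tK p rho z.

(* v_p(z) < 0 *)
Definition Kvneg p rho (z : K) : Prop := ~ Kin_pow p rho 0 z.

Definition ruleA p rho (n : nat) (z : K) : rat :=
  match n with
  | O => sbar p rho z
  | _ => if excluded_middle_informative (Kvneg p rho z)
         then tbar p rho z else sbar p rho z
  end.
Definition ruleB p rho (n : nat) (z : K) : rat :=
  if odd n then tbar p rho z else sbar p rho z.

Fixpoint cf_alpha (D : int) (rule : nat -> K -> rat) (a0 : K) (n : nat) : K :=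
  match n with
  | O => a0
  | m.+1 => Kinv D (Ksubq (cf_alpha D rule a0 m) (rule m (cf_alpha D rule a0 m)))
  end.
Definition cf_b D rule a0 n : rat := rule n (cf_alpha D rule a0 n).

(* the expansion never stops (alpha_n <> b_n for all n) and the partial
   quotients are ultimately periodic *)
Definition ult_periodic_expansion (D : int) (rule : nat -> K -> rat) (a0 : K) : Prop :=
  (forall n, cf_alpha D rule a0 n <> (cf_b D rule a0 n, 0)) /\
  exists (N k : nat), (0 < k)%N /\
    forall n, (N <= n)%N -> cf_b D rule a0 (n + k) = cf_b D rule a0 n.

(* Write the complete quotients as alpha_n = (P_n + sqrt (D Q^2)) / Q_n.
   p-adically: the digit choices keep alpha_n - b_n in Z_p, which bounds the
   valuation of the irrational part of alpha_n from above (by that of alpha_0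
   or of 1 / (2 sqrt D)); as P_n, Q_n lie in Z[1/p], the numbers Q_n p^E are
   nonzero integers for a fixed E.  Archimedean: from
   |Q_(n+1)| <= (alpha_n - b_n)^2 |Q_n| + C with |alpha_n - b_n| <= p/2 <= 3/2
   after an s-step, <= 1/2 after a t-step, and no two consecutive s-steps
   (an s-step leaves a quotient of negative valuation), the Q_n and
   P_(n+1) = -(alpha_n - b_n) Q_n are bounded.  So P_n p^E and Q_n p^E are
   bounded integers, the alpha_n take finitely many values, and the
   deterministic expansion is eventually periodic. *)

From HB Require Import structures.
From mathcomp Require Import all_boot all_order all_algebra.
From mathcomp Require Import zify ring lra.
From Stdlib Require Import ClassicalEpsilon Classical.
Set Implicit Arguments. Unset Strict Implicit. Unset Printing Implicit Defensive.
Import Order.TTheory GRing.Theory Num.Theory.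
Local Open Scope ring_scope.

Section PadicValuation.
Variable p : nat.

Lemma vq_frac (m d : int) : m != 0 -> d != 0 ->
  vq p (m%:~R / d%:~R) = (logn p `|m|%N)%:Z - (logn p `|d|%N)%:Z.
Proof.
move=> m0 d0; set r := _ / _.
have E : numq r * d = m * denq r.
  apply: (@intr_inj rat); rewrite !rmorphM /= numqE /r.
  by field; rewrite intr_eq0.
have nr0 : numq r != 0.
  by rewrite numq_eq0 /r mulf_eq0 invr_eq0 !intr_eq0 negb_or m0 d0.
have := congr1 (fun x => logn p `|x|%N) E => /=.
rewrite !abszM !lognM ?absz_gt0 ?denq_neq0 // /vq; lia.
Qed.

Lemma vq_int (m : int) : vq p m%:~R = (logn p `|m|%N)%:Z.
Proof. by rewrite /vq numq_int denq_int logn1 subr0. Qed.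

Lemma vq0 : vq p 0 = 0.
Proof. by have := vq_int 0; rewrite /= logn0. Qed.

Lemma vq1 : vq p 1 = 0.
Proof. by have := vq_int 1; rewrite /= logn1. Qed.

Lemma vqN a : vq p (- a) = vq p a.
Proof. by rewrite /vq numqN denqN abszN. Qed.

Lemma vqM a b : a != 0 -> b != 0 -> vq p (a * b) = vq p a + vq p b.
Proof.
move=> a0 b0; rewrite -[a]divq_num_den -[b]divq_num_den.
have na : numq a != 0 by rewrite numq_eq0.
have nb : numq b != 0 by rewrite numq_eq0.
have -> : (numq a)%:~R / (denq a)%:~R * ((numq b)%:~R / (denq b)%:~R) =
   (numq a * numq b)%:~R / (denq a * denq b)%:~R :> rat.
  by rewrite !rmorphM /= invfM; ring.
rewrite !vq_frac ?mulf_neq0 ?denq_neq0 // !abszM !lognM ?absz_gt0 ?denq_neq0 //.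
lia.
Qed.

Lemma vqV a : vq p a^-1 = - vq p a.
Proof.
have [->|a0] := eqVneq a 0; first by rewrite invr0 vq0.
rewrite -[a]divq_num_den invf_div.
have na : numq a != 0 by rewrite numq_eq0.
rewrite !vq_frac ?denq_neq0 //; lia.
Qed.

Lemma vq_div a b : a != 0 -> b != 0 -> vq p (a / b) = vq p a - vq p b.
Proof. by move=> a0 b0; rewrite vqM ?invr_eq0 // vqV. Qed.

Lemma vqX a n : a != 0 -> vq p (a ^+ n) = vq p a *+ n.
Proof.
move=> a0; elim: n => [|n IH]; first by rewrite expr0 mulr0n vq1.
by rewrite exprS vqM ?expf_neq0 // IH mulrS.
Qed.

Notation pge := (padic_ge p).

Lemma padic_geE j a : a != 0 -> pge j a = (j <= vq p a).
Proof. by rewrite /padic_ge => /negbTE ->. Qed.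

Lemma padic_ge0 j : pge j 0.
Proof. by rewrite /padic_ge eqxx. Qed.

Lemma padic_geN j a : pge j (- a) = pge j a.
Proof. by rewrite /padic_ge oppr_eq0 vqN. Qed.

Lemma padic_geM i j a b : pge i a -> pge j b -> pge (i + j) (a * b).
Proof.
rewrite /padic_ge mulf_eq0; have [//|a0] := eqVneq a 0.
by have [//|b0] := eqVneq b 0 => /= ha hb; rewrite vqM // lerD.
Qed.

Lemma padic_geW i j a : i <= j -> pge j a -> pge i a.
Proof. by rewrite /padic_ge => ij /orP [->//|h]; rewrite (le_trans ij h) orbT. Qed.

Lemma padic_ge_int (m : int) : pge 0 m%:~R.
Proof. by rewrite /padic_ge vq_int orbT. Qed.

Lemma padic_ge_val a : pge (vq p a) a.
Proof. by rewrite /padic_ge lexx orbT. Qed.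

Lemma padic_ge_bounded a : exists n : nat, pge (- n%:Z) a.
Proof. by exists `|vq p a|%N; apply: padic_geW (padic_ge_val a); lia. Qed.

Lemma padic_ge1_1 : ~~ pge 1 1.
Proof. by rewrite /padic_ge oner_eq0 vq1. Qed.

End PadicValuation.

Section PrimeValuation.
Variable p : nat.
Hypothesis p_prime : prime p.
Notation pge := (padic_ge p).

Lemma p_neq0 : (p%:R : rat) != 0.
Proof. by rewrite pnatr_eq0 -lt0n prime_gt0. Qed.

Lemma pX_neq0 n : (p%:R : rat) ^+ n != 0.
Proof. exact: expf_neq0 p_neq0. Qed.

Lemma pX_gt0 n : (0 : rat) < p%:R ^+ n.
Proof. by rewrite exprn_gt0 // ltr0n prime_gt0. Qed.

Lemma vq_pX n : vq p (p%:R ^+ n) = n%:Z.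
Proof.
rewrite vqX ?p_neq0 // -[p%:R]/((p%:Z)%:~R) vq_int /= logn_prime ?eqxx //.
lia.
Qed.

Lemma vq_ge0_ndvd_den a : 0 <= vq p a -> ~~ (p %| `|denq a|)%N.
Proof.
have [->|a0] := eqVneq a 0.
  by move=> _; rewrite (_ : denq 0 = 1) // dvdn1; apply: contraTneq p_prime => ->.
rewrite /vq => H; apply/negP => pd.
have : (0 < logn p `|denq a|)%N by rewrite logn_gt0 mem_primes p_prime absz_gt0 denq_neq0.
have [ln0|lnp] := eqVneq (logn p `|numq a|) 0%N; first by move: H; rewrite ln0; lia.
have pn : (p %| `|numq a|)%N.
  have : (0 < logn p `|numq a|)%N by rewrite lt0n.
  by rewrite logn_gt0 mem_primes => /and3P [].
have : (p %| gcdn `|numq a| `|denq a|)%N by rewrite dvdn_gcd pn pd.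
rewrite (eqP (coprime_num_den a)) dvdn1 => /eqP p1.
by move: p_prime; rewrite p1.
Qed.

Lemma vq1D_ge0 r : 0 <= vq p r -> 1 + r != 0 -> 0 <= vq p (1 + r).
Proof.
move=> /vq_ge0_ndvd_den nd n0.
have -> : 1 + r = (denq r + numq r)%:~R / (denq r)%:~R.
  by rewrite rmorphD /= mulrDl divff ?intr_eq0 ?denq_neq0 // divq_num_den.
have dn : denq r + numq r != 0.
  apply: contraNneq n0 => E; rewrite -[r]divq_num_den.
  have -> : numq r = - denq r by apply/eqP; rewrite -subr_eq0 opprK addrC E.
  by rewrite rmorphN /= mulNr divff ?intr_eq0 ?denq_neq0 // subrr.
rewrite vq_frac ?denq_neq0 // (@logn_coprime p `|denq r|) ?subr0 //.
by rewrite prime_coprime.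
Qed.

Lemma vqD_ge j a b : a != 0 -> b != 0 -> a + b != 0 ->
  j <= vq p a -> j <= vq p b -> j <= vq p (a + b).
Proof.
wlog le : a b / vq p a <= vq p b.
  move=> W a0 b0 ab0 ha hb; have [h|h] := leP (vq p a) (vq p b); first exact: W.
  by rewrite addrC; apply: W => //; [exact: ltW | rewrite addrC].
move=> a0 b0 ab0 ha hb.
have eab : a + b = a * (1 + b / a) by field.
have h1 : 1 + b / a != 0 by apply: contraNneq ab0 => E; rewrite eab E mulr0.
rewrite eab vqM //.
have : 0 <= vq p (1 + b / a) by apply: vq1D_ge0 => //; rewrite vq_div //; lia.
lia.
Qed.

Lemma padic_ge_pX (n : nat) : pge n (p%:R ^+ n).
Proof. by rewrite padic_geE ?pX_neq0 // vq_pX. Qed.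

Lemma padic_ge_pXV (n : nat) : pge (- n%:Z) (p%:R ^+ n)^-1.
Proof. by rewrite padic_geE ?invr_eq0 ?pX_neq0 // vqV vq_pX. Qed.

Lemma padic_geD j a b : pge j a -> pge j b -> pge j (a + b).
Proof.
rewrite /padic_ge; have [->|a0] := eqVneq a 0; first by rewrite add0r.
have [->|b0] := eqVneq b 0; first by rewrite addr0 => /= ->; rewrite orbT.
by have [//|ab0] := eqVneq (a + b) 0 => /=; apply: vqD_ge.
Qed.

Lemma padic_geB j a b : pge j a -> pge j b -> pge j (a - b).
Proof. by move=> ha hb; rewrite padic_geD // padic_geN. Qed.

Lemma vqD_small a b : a != 0 -> pge (vq p a + 1) b ->
  a + b != 0 /\ vq p (a + b) = vq p a.
Proof.
move=> a0; have [->|b0] := eqVneq b 0; first by rewrite addr0.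
rewrite padic_geE // => hb.
have ab0 : a + b != 0.
  apply/eqP => E; have eb : b = - a by apply/eqP; rewrite -addr_eq0 addrC E.
  by move: hb; rewrite eb vqN; lia.
split => //.
have h1 : vq p a <= vq p (a + b) by apply: vqD_ge => //; lia.
suff h2 : vq p (a + b) <= vq p a by lia.
rewrite leNgt; apply/negP => lt.
have := @vqD_ge (vq p a + 1) (a + b) (- b) ab0.
by rewrite oppr_eq0 addrK b0 a0 vqN => /(_ isT isT _ hb); lia.
Qed.

End PrimeValuation.

Section Digits.
Variable p : nat.
Hypothesis p_prime : prime p.
Notation pge := (padic_ge p).

Lemma padic_ge1_dvd (m : int) : (p %| `|m|)%N -> pge 1 m%:~R.
Proof.
have [->|m0] := eqVneq m 0; first by rewrite padic_ge0.
move=> pm; rewrite padic_geE ?intr_eq0 // vq_int //.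
have : (0 < logn p `|m|)%N by rewrite logn_gt0 mem_primes p_prime absz_gt0 m0.
lia.
Qed.

Lemma padic_ge0_intV (d : int) : ~~ (p %| `|d|)%N -> pge 0 (d%:~R)^-1.
Proof.
move=> nd; have d0 : d != 0 by apply: contraNneq nd => ->.
rewrite padic_geE ?invr_eq0 ?intr_eq0 // vqV (vq_int p d) logn_coprime //.
by rewrite prime_coprime.
Qed.

Lemma digitR_residue (n d : int) : ~~ (p %| `|d|)%N ->
  exists2 a : int, digitR p a & (p%:Z %| n - a * d)%Z.
Proof.
move=> nd; have cop : coprimez d p by rewrite coprimezE coprime_sym prime_coprime.
case: (Bezoutz d p) => u [v]; rewrite (eqP cop) => Buv.
have p0 : p%:Z != 0 by have := prime_gt0 p_prime; lia.
set q := ((n * u) %/ p)%Z; set a0 := ((n * u) %% p)%Z.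
have a0_ge0 : 0 <= a0 by apply: modz_ge0.
have a0_lt : a0 < p%:Z by have := ltz_mod (n * u) p0.
have nu : n * u = q * p + a0 by apply: divz_eq.
have shift : forall e : int, (p%:Z %| n - (a0 - e * p) * d)%Z.
  move=> e; apply/dvdzP; exists (n * v + (q + e) * d).
  have -> : a0 = n * u - q * p by rewrite nu; ring.
  by rewrite -{1}[n]mulr1 -Buv; ring.
have [p2|podd] := even_prime p_prime.
  exists a0; last by have := shift 0; rewrite mul0r subr0.
  by rewrite /digitR p2 /=; move: a0_lt; rewrite p2; lia.
have hp : p = (p./2).*2.+1 by have := odd_double_half p; rewrite podd; lia.
have p2 : (p == 2)%N = false by rewrite hp; case: (p./2).
have [small|big] := leP (a0 * 2) (p.-1)%:Z.
  exists a0; last by have := shift 0; rewrite mul0r subr0.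
  by rewrite /digitR p2; move: small; lia.
exists (a0 - p%:Z); last by have := shift 1; rewrite mul1r.
by rewrite /digitR p2; move: big a0_lt hp; lia.
Qed.

Lemma digitR_approx r : pge 0 r -> exists a : int, digitR p a /\ pge 1 (r - a%:~R).
Proof.
move=> r0; have : 0 <= vq p r.
  by move: r0; rewrite /padic_ge => /orP [/eqP ->|//]; rewrite vq0.
move=> /(vq_ge0_ndvd_den p_prime) nd.
have [a da ha] := digitR_residue (numq r) nd.
exists a; split => //.
have -> : r - a%:~R = (numq r - a * denq r)%:~R * ((denq r)%:~R)^-1.
  rewrite rmorphB rmorphM /= mulrBl -mulrA divff ?intr_eq0 ?denq_neq0 //.
  by rewrite mulr1 divq_num_den.
by have := padic_geM (padic_ge1_dvd ha) (padic_ge0_intV nd); rewrite addr0.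
Qed.

Lemma digitR_expansion n r : pge (- n%:Z) r -> exists a : nat -> int,
  (forall i, digitR p (a i)) /\ pge 1 (r - \sum_(0 <= i < n.+1) (a i)%:~R / p%:R ^+ i).
Proof.
elim: n r => [|n IH] r h.
  have [a [da ha]] := digitR_approx h.
  by exists (fun _ => a); split => //; rewrite big_nat1 expr0 divr1.
have [a0 [da0 ha0]] : exists a0 : int, digitR p a0 /\ pge 1 (r * p%:R ^+ n.+1 - a0%:~R).
  by apply: digitR_approx; have := padic_geM h (padic_ge_pX p_prime n.+1); rewrite addNr.
have [a [da ha]] : exists a : nat -> int, (forall i, digitR p (a i)) /\
    pge 1 (r - a0%:~R / p%:R ^+ n.+1 - \sum_(0 <= i < n.+1) (a i)%:~R / p%:R ^+ i).
  apply: IH; have -> : r - a0%:~R / p%:R ^+ n.+1 =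
      (r * p%:R ^+ n.+1 - a0%:~R) * (p%:R ^+ n.+1)^-1.
    by rewrite mulrBl -mulrA divff ?pX_neq0 // mulr1.
  have := padic_geM ha0 (padic_ge_pXV p_prime n.+1).
  by rewrite (_ : 1 - _ = - n%:Z) //; lia.
exists (fun i => if i == n.+1 then a0 else a i); split; first by move=> i; case: eqP.
rewrite big_nat_recr //= eqxx (@eq_big_nat _ _ _ 0 n.+1 _ (fun i => (a i)%:~R / p%:R ^+ i)).
  by move: ha; congr (pge _ _); ring.
by move=> i /andP [_ hi]; rewrite ifN // neq_ltn hi.
Qed.

End Digits.

Definition in_Z1p (p : nat) (r : rat) : Prop :=
  exists (m : int) (j : nat), r = m%:~R / p%:R ^+ j.

Section ZInvp.
Variable p : nat.
Hypothesis p_prime : prime p.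
Notation Z1p := (in_Z1p p).

Lemma in_Z1p_int (m : int) : Z1p m%:~R.
Proof. by exists m, 0%N; rewrite expr0 divr1. Qed.

Lemma in_Z1pD a b : Z1p a -> Z1p b -> Z1p (a + b).
Proof.
move=> [m [i ->]] [n [j ->]]; exists (m * p ^+ j + n * p ^+ i), (i + j)%N.
rewrite rmorphD !rmorphM /= !rmorphXn /= exprD.
by field; rewrite !pX_neq0.
Qed.

Lemma in_Z1pN a : Z1p a -> Z1p (- a).
Proof. by move=> [m [i ->]]; exists (- m), i; rewrite rmorphN mulNr. Qed.

Lemma in_Z1pB a b : Z1p a -> Z1p b -> Z1p (a - b).
Proof. by move=> ha hb; apply/in_Z1pD/in_Z1pN. Qed.

Lemma in_Z1pM a b : Z1p a -> Z1p b -> Z1p (a * b).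
Proof.
move=> [m [i ->]] [n [j ->]]; exists (m * n), (i + j)%N.
by rewrite rmorphM /= exprD; field; rewrite !pX_neq0.
Qed.

Lemma in_Z1p_fin_digits lo c : fin_digits p lo c -> Z1p c.
Proof.
move=> [N [a [_ ->]]]; elim/big_ind: _ => //; first exact: (in_Z1p_int 0).
  exact: in_Z1pD.
by move=> i _; exists (a i), i.
Qed.

Lemma in_Z1p_scale (e : nat) r : Z1p r -> r != 0 -> - e%:Z <= vq p r ->
  exists m : int, r * p%:R ^+ e = m%:~R.
Proof.
move=> [m [j ->]] r0 hv.
have m0 : m != 0 by apply: contraNneq r0 => ->; rewrite mul0r.
have pXE k : (p%:R : rat) ^+ k = (p ^ k)%N%:Z%:~R by rewrite -natrX.
have [je|ej] := leqP j e.
  exists (m * (p ^ (e - j))%N); rewrite rmorphM /= -pXE.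
  set k := (e - j)%N; have -> : e = (j + k)%N by rewrite /k; lia.
  by rewrite exprD; field; rewrite pX_neq0.
move: hv; rewrite vq_div ?intr_eq0 ?pX_neq0 // vq_int vq_pX // => hv.
have hd : ((p ^ (j - e))%N%:Z %| m)%Z by rewrite dvdzE pfactor_dvdn ?absz_gt0 //; lia.
exists (m %/ (p ^ (j - e))%N)%Z.
apply: (mulIf (pX_neq0 p_prime (j - e))).
rewrite [in RHS]pXE -rmorphM /= divzK //.
set k := (j - e)%N; have -> : j = (e + k)%N by rewrite /k; lia.
by rewrite exprD; field; rewrite !pX_neq0.
Qed.

End ZInvp.

Lemma roundq_near x : `|x - (roundq x)%:~R| <= 2^-1.
Proof.
rewrite /roundq; have h1 := real_floor_le (num_real (x + 2^-1)).
have h2 := real_floorD1_gt (num_real (x + 2^-1)).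
move: h1 h2; set f := Num.floor _; rewrite rmorphD /= => h1 h2.
by rewrite ler_norml; apply/andP; split; lra.
Qed.

Section DigitSums.
Variable p : nat.
Hypothesis p_prime : prime p.
Variable rho : nat -> rat.
Hypothesis rho_cauchy_step : forall k : nat, padic_ge p k%:Z (rho k.+1 - rho k).
Notation pge := (padic_ge p).

Lemma rho_cauchy k j : (k <= j)%N -> pge k (rho j - rho k).
Proof.
elim: j => [|j IH]; first by rewrite leqn0 => /eqP ->; rewrite subrr padic_ge0.
rewrite leq_eqVlt => /orP [/eqP ->|]; first by rewrite subrr padic_ge0.
rewrite ltnS => kj.
have -> : rho j.+1 - rho k = (rho j.+1 - rho j) + (rho j - rho k) by ring.
by apply: (padic_geD p_prime) (IH kj); apply: padic_geW (rho_cauchy_step j); lia.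
Qed.

Lemma approx_cauchy (z : K) : exists k0 : nat, forall k, (k0 <= k)%N ->
  pge 1 (approx rho z k - approx rho z k0).
Proof.
exists `|1 - vq p z.2|%N => k hk.
have -> : approx rho z k - approx rho z `|1 - vq p z.2|%N =
    z.2 * (rho k - rho `|1 - vq p z.2|%N) by rewrite /approx; ring.
by apply: padic_geW (padic_geM (padic_ge_val p z.2) (rho_cauchy hk)); lia.
Qed.

Lemma Kin_powW i j (z : K) : i <= j -> Kin_pow p rho j z -> Kin_pow p rho i z.
Proof. by move=> ij [k0 h]; exists k0 => k /h; apply: padic_geW. Qed.

Lemma Kin_powB j (z : K) c d : Kin_pow p rho j (Ksubq z c) -> pge j d ->
  Kin_pow p rho j (Ksubq z (c - d)).
Proof.
move=> [k0 h] hd; exists k0 => k /h; rewrite /approx /Ksubq /= => hk.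
have -> : z.1 - (c - d) + z.2 * rho k = (z.1 - c + z.2 * rho k) + d by ring.
exact: (padic_geD p_prime hk hd).
Qed.

Lemma is_s_exists (z : K) : exists c, is_s p rho z c.
Proof.
have [k0 hk0] := approx_cauchy z.
have [n hn] := padic_ge_bounded p (approx rho z k0).
have [a [da ha]] := digitR_expansion p_prime hn.
exists (\sum_(0 <= i < n.+1) (a i)%:~R / p%:R ^+ i); split; first by exists n.+1, a.
exists k0 => k hk; rewrite /approx /=.
set S := \sum_(_ <= _ < _) _.
have -> : z.1 - S + z.2 * rho k =
    (approx rho z k - approx rho z k0) + (approx rho z k0 - S) by rewrite /approx; ring.
exact: (padic_geD p_prime (hk0 k hk) ha).
Qed.

Lemma is_t_exists (z : K) : exists c, is_t p rho z c.
Proof.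
have [_ [[N [a [da ->]]] hs]] := is_s_exists z.
exists (\sum_(1 <= i < N) (a i)%:~R / p%:R ^+ i); split; first by exists N, a.
case: N hs => [|N] hs; first by rewrite !big_geq // in hs *; apply: Kin_powW hs.
rewrite big_ltn // expr0 divr1 in hs.
have := Kin_powB (Kin_powW ler01 hs) (padic_ge_int p (a 0%N)).
by rewrite addrC addKr.
Qed.

Lemma sK_spec (z : K) : is_s p rho z (sK p rho z).
Proof. exact: epsilon_spec (is_s_exists z). Qed.

Lemma tK_spec (z : K) : is_t p rho z (tK p rho z).
Proof. exact: epsilon_spec (is_t_exists z). Qed.

Lemma sbar_in_Z1p (z : K) : in_Z1p p (sbar p rho z).
Proof.
apply: (in_Z1pD p_prime); last exact: (in_Z1p_fin_digits p_prime (sK_spec z).1).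
by apply: (in_Z1pM p_prime); [apply: in_Z1p_int | apply: (in_Z1p_int p p)].
Qed.

Lemma tbar_in_Z1p (z : K) : in_Z1p p (tbar p rho z).
Proof.
apply: (in_Z1pD p_prime); first exact: in_Z1p_int.
exact: (in_Z1p_fin_digits p_prime (tK_spec z).1).
Qed.

Lemma sbar_Kin_pow (z : K) : Kin_pow p rho 1 (Ksubq z (sbar p rho z)).
Proof.
rewrite /sbar addrC -[X in _ + X]opprK.
apply: Kin_powB (sK_spec z).2 _; rewrite padic_geN.
by have := padic_geM (padic_ge_int p (roundq _)) (padic_ge_pX p_prime 1); rewrite expr1.
Qed.

Lemma tbar_Kin_pow (z : K) : Kin_pow p rho 0 (Ksubq z (tbar p rho z)).
Proof.
rewrite /tbar addrC -[X in _ + X]opprK.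
by apply: Kin_powB (tK_spec z).2 _; rewrite padic_geN padic_ge_int.
Qed.

Lemma sbar_near (z : K) : `|z.1 - sbar p rho z| <= p%:R / 2.
Proof.
rewrite /sbar /Ktrd; set t := (z.1 - sK p rho z) / p%:R.
have -> : z.1 - ((roundq t)%:~R * p%:R + sK p rho z) = p%:R * (t - (roundq t)%:~R).
  by rewrite /t; field; rewrite p_neq0.
by rewrite normrM ger0_norm ?ler0n // ler_pM2l ?ltr0n ?prime_gt0 ?roundq_near.
Qed.

Lemma tbar_near (z : K) : `|z.1 - tbar p rho z| <= 2^-1.
Proof. by rewrite /tbar /Ktrd opprD addrA addrAC roundq_near. Qed.

End DigitSums.

Lemma rat_sqr_int (r : rat) (m : int) : r ^+ 2 = m%:~R -> exists z : int, r = z%:~R.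
Proof.
have rE : r = (numq r)%:~R / (denq r)%:~R by rewrite divq_num_den.
move: (denq_gt0 r) (coprime_num_den r) rE; set n := numq r; set d := denq r.
move=> d_gt0 cop -> E; exists n.
have nd : n ^+ 2 = m * d ^+ 2.
  apply: (@intr_inj rat); rewrite !rmorphM /= -E.
  by field; rewrite intr_eq0 gt_eqF.
have cop2 : coprimez d (n ^+ 2) by rewrite coprimez_pexpr // coprimezE coprime_sym.
have /gcdz_idPl : (d %| n ^+ 2)%Z by rewrite nd dvdz_mull // dvdz_mulr.
rewrite (eqP cop2) => d1.
by rewrite (_ : d = 1) ?divr1 //; lia.
Qed.

Definition Knorm (D : int) (z : K) : rat := z.1 ^+ 2 - D%:~R * z.2 ^+ 2.

Lemma Kinv1 D (z : K) : (Kinv D z).1 = z.1 / Knorm D z. Proof. by []. Qed.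
Lemma Kinv2 D (z : K) : (Kinv D z).2 = - z.2 / Knorm D z. Proof. by []. Qed.

Lemma cf_alphaS D rule (a0 : K) n : cf_alpha D rule a0 n.+1 =
  Kinv D (Ksubq (cf_alpha D rule a0 n) (rule n (cf_alpha D rule a0 n))).
Proof. by []. Qed.

Section QuadraticField.
Variable D : int.
Hypothesis D_nonsquare : ~ (exists m : int, m * m = D).

Lemma D_neq0 : D != 0.
Proof. by apply: contra_not_neq D_nonsquare => ->; exists 0. Qed.

Lemma Knorm_neq0 (z : K) : z.2 != 0 -> Knorm D z != 0.
Proof.
move=> y0; apply/negP => /eqP E.
have hD : (z.1 / z.2) ^+ 2 = D%:~R.
  have : Knorm D z / z.2 ^+ 2 == 0 by rewrite E mul0r.
  by rewrite /Knorm mulrBl mulrK ?unitfE ?expf_neq0 // subr_eq0 -expr_div_n => /eqP.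
have [m hm] := rat_sqr_int hD; apply: D_nonsquare; exists m; apply: (@intr_inj rat).
by rewrite rmorphM /= -hm -expr2 hD.
Qed.

Lemma cf_alpha_irrational rule (a0 : K) n : a0.2 != 0 -> (cf_alpha D rule a0 n).2 != 0.
Proof.
move=> y0; elim: n => [|n IH] //.
by rewrite Kinv2 mulf_neq0 ?oppr_eq0 ?invr_eq0 ?Knorm_neq0.
Qed.

Lemma cf_alpha_neq_b rule (a0 : K) n : a0.2 != 0 ->
  cf_alpha D rule a0 n <> (cf_b D rule a0 n, 0).
Proof. by move=> /(cf_alpha_irrational rule n) + E; rewrite E eqxx. Qed.

End QuadraticField.

Section QuadraticStep.
Variable p : nat.
Hypothesis p_prime : prime p.
Variable rho : nat -> rat.
Variable D : int.
Hypothesis D_nonsquare : ~ (exists m : int, m * m = D).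
Hypothesis rho_sqrt : forall k : nat, padic_ge p k%:Z (rho k ^+ 2 - D%:~R).
Notation pge := (padic_ge p).

Definition k_rho : nat := (`|vq p D%:~R|%N + 1)%N.

Lemma rho_vq k : (k_rho <= k)%N -> rho k != 0 /\ vq p (rho k) *+ 2 = vq p D%:~R.
Proof.
move=> hk; have Dq0 : (D%:~R : rat) != 0 by rewrite intr_eq0 (D_neq0 D_nonsquare).
have h : pge (vq p D%:~R + 1) (rho k ^+ 2 - D%:~R).
  by apply: padic_geW (rho_sqrt k); rewrite /k_rho in hk; lia.
have [] := vqD_small p_prime Dq0 h; rewrite addrC subrK => r0 e.
have rk0 : rho k != 0 by apply: contraNneq r0 => ->; rewrite expr0n.
by split => //; rewrite -vqX.
Qed.

Lemma rho_vq_const k : (k_rho <= k)%N -> vq p (rho k) = vq p (rho k_rho).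
Proof.
move=> hk; have [_ e1] := rho_vq hk; have [_ e2] := rho_vq (leqnn k_rho).
by move: e1 e2; lia.
Qed.

(* [rho k_rho] has the valuation of [sqrt D]: this is [v_p(1 / (2 sqrt D))]. *)
Definition inv_vq_bound : int := - vq p 2 - vq p (rho k_rho).

Lemma approx_norm_close (z : K) k : z.2 != 0 ->
  (`|vq p (Knorm D z) - vq p z.2 *+ 2|%N < k)%N ->
  pge (vq p (Knorm D z) + 1) (approx rho z k * (z.1 - z.2 * rho k) - Knorm D z).
Proof.
move=> y0 hk.
have -> : approx rho z k * (z.1 - z.2 * rho k) - Knorm D z =
    - z.2 ^+ 2 * (rho k ^+ 2 - D%:~R) by rewrite /approx /Knorm; ring.
have hy : pge (vq p z.2 *+ 2) (- z.2 ^+ 2) by rewrite padic_geN padic_geE ?expf_neq0 ?vqX.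
by apply: padic_geW (padic_geM hy (rho_sqrt k)); lia.
Qed.

Lemma Kinv_vq_le (z : K) : z.2 != 0 -> Kin_pow p rho 0 z ->
  vq p (Kinv D z).2 <= Num.max (vq p z.2) inv_vq_bound.
Proof.
move=> y0 [k0 hk0]; have N0 := Knorm_neq0 D_nonsquare y0.
set k := (k0 + k_rho + `|vq p (Knorm D z) - vq p z.2 *+ 2|.+1)%N.
set A := approx rho z k; set B := z.1 - z.2 * rho k.
have [AB0 vAB] : A * B != 0 /\ vq p (A * B) = vq p (Knorm D z).
  have hk : (`|vq p (Knorm D z) - vq p z.2 *+ 2| < k)%N by rewrite /k; lia.
  by move: (vqD_small p_prime N0 (approx_norm_close y0 hk)); rewrite addrC subrK.
have [A0 B0] : A != 0 /\ B != 0 by apply/andP; rewrite -negb_or -mulf_eq0.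
have vA : 0 <= vq p A by rewrite -padic_geE //; apply: hk0; rewrite /k; lia.
have hk_rho : (k_rho <= k)%N by rewrite /k; lia.
have [r0 _] := rho_vq hk_rho.
rewrite Kinv2 mulNr vqN vq_div // -vAB vqM // le_max.
have [vN|vN] := leP 0 (vq p A + vq p B); first by apply/orP; left; lia.
apply/orP; right; rewrite /inv_vq_bound -(rho_vq_const hk_rho).
(* otherwise [A = B + 2 z.2 rho_k] has the valuation of [B], so [v(AB) = 2 v(A) >= 0] *)
suff : vq p (2 * z.2 * rho k) <= vq p B by rewrite !vqM ?mulf_neq0 //; lia.
rewrite leNgt; apply/negP => lt.
have h : pge (vq p B + 1) (2 * z.2 * rho k) by rewrite padic_geE ?mulf_neq0 //; lia.
have eA : B + 2 * z.2 * rho k = A by rewrite /A /B /approx; ring.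
by have [_] := vqD_small p_prime B0 h; rewrite eA; lia.
Qed.

Lemma Kinv_vneg (z : K) : z.2 != 0 -> Kin_pow p rho 1 z -> Kvneg p rho (Kinv D z).
Proof.
move=> y0 [k0 hk0] [k1 hk1]; have N0 := Knorm_neq0 D_nonsquare y0.
set k := (k0 + k1 + `|vq p (Knorm D z) - vq p z.2 *+ 2|.+1)%N.
have hk : (`|vq p (Knorm D z) - vq p z.2 *+ 2| < k)%N by rewrite /k; lia.
have hA : pge 1 (approx rho z k) by apply: hk0; rewrite /k; lia.
have hA' : pge 0 (approx rho (Kinv D z) k) by apply: hk1; rewrite /k; lia.
set d := (approx rho z k * (z.1 - z.2 * rho k) - Knorm D z) / Knorm D z.
have hd : pge 1 d.
  have := padic_geM (approx_norm_close y0 hk) (padic_ge_val p (Knorm D z)^-1).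
  by rewrite vqV; apply: padic_geW; lia.
(* the approximations of [z] and of [1/z] multiply to [1 + d], with [d] in [p Z_p] *)
have e : 1 = approx rho z k * approx rho (Kinv D z) k - d.
  by rewrite /d /approx Kinv1 Kinv2; field.
have := padic_geB p_prime (padic_geM hA hA') hd.
by rewrite addr0 -e (negbTE (padic_ge1_1 p)).
Qed.

End QuadraticStep.

Lemma eventually_periodic (T : eqType) (f : nat -> T) (n0 : nat) (s : seq T) :
  (forall n, (n0 <= n)%N -> f n \in s) ->
  (forall i j, (n0 <= i)%N -> (n0 <= j)%N -> f i = f j -> f i.+1 = f j.+1) ->
  exists N k, [/\ (n0 <= N)%N, (0 < k)%N & forall n, (N <= n)%N -> f (n + k)%N = f n].
Proof.
move=> f_in f_next.
have [i [j [n0i ij fij]]] : exists i j, [/\ (n0 <= i)%N, (i < j)%N & f i = f j].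
  have sub : {subset [seq f n | n <- iota n0 (size s).+1] <= s}.
    by move=> x /mapP [n]; rewrite mem_iota => /andP [n0n _] ->; apply: f_in.
  have /(uniqPn (f n0)) [a [b [ab]]] : ~~ uniq [seq f n | n <- iota n0 (size s).+1].
    by apply/negP => /uniq_leq_size /(_ sub); rewrite size_map size_iota ltnn.
  rewrite size_map size_iota => bs.
  rewrite !(nth_map 0%N) ?size_iota ?nth_iota; try lia.
  by move=> e; exists (n0 + a)%N, (n0 + b)%N; split => //; lia.
have shift m : f (i + m)%N = f (j + m)%N.
  elim: m => [|m IH]; first by rewrite !addn0.
  by rewrite !addnS; apply: f_next => //; lia.
exists i, (j - i)%N; split => //; first lia.
move=> n hn; rewrite (_ : n + (j - i) = j + (n - i))%N; last lia.
by rewrite -shift subnKC.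
Qed.

Lemma cf_b_periodic D rule (a0 : K) (cls : nat -> bool) (s : seq K) :
  (forall n, (0 < n)%N -> cf_alpha D rule a0 n \in s) ->
  (forall i j, (0 < i)%N -> (0 < j)%N -> cls i = cls j ->
     rule i =1 rule j /\ cls i.+1 = cls j.+1) ->
  exists N k, (0 < k)%N /\
    forall n, (N <= n)%N -> cf_b D rule a0 (n + k)%N = cf_b D rule a0 n.
Proof.
move=> al_in cls_next; pose f n := (cf_alpha D rule a0 n, cls n).
have [|i j i0 j0 [ea ec]|N [k [N0 k0 per]]] :=
    @eventually_periodic _ f 1 [seq (z, c) | z <- s, c <- [:: true; false]].
- by move=> n n0; apply: allpairs_f; [exact: al_in | case: (cls n)].
- by have [er ecS] := cls_next i j i0 j0 ec; rewrite /f /= ea er ecS.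
exists N, k; split => // n Nn; case: (per n Nn) => ea ec.
have n_gt0 : (0 < n)%N by lia.
have nk_gt0 : (0 < n + k)%N by lia.
have [er _] := cls_next _ _ nk_gt0 n_gt0 ec.
by rewrite /cf_b ea er.
Qed.

Lemma absz_le_ceil (m : int) (x : rat) : `|m%:~R : rat| <= x -> (`|m| <= `|Num.ceil x|)%N.
Proof.
move=> h; have : (`|m|%:~R : rat) <= (Num.ceil x)%:~R.
  by rewrite intr_norm; apply: le_trans h (real_ceil_ge (num_real x)).
by rewrite ler_int; move: (Num.ceil x) => c; lia.
Qed.

Lemma mem_int_range (m : int) (B : nat) : (`|m| <= B)%N ->
  m \in [seq i%:Z - B%:Z | i <- iota 0 (B + B).+1].
Proof.
move=> h; apply/mapP; exists (absz (m + B%:Z)); first by rewrite mem_iota; lia.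
lia.
Qed.

Section BoundedExpansion.
Variable p : nat.
Hypotheses (p_prime : prime p) (p_le3 : (p <= 3)%N).
Variable rho : nat -> rat.
Variables D P Q : int.
Hypothesis Q_neq0 : Q != 0.
Hypothesis D_nonsquare : ~ (exists m : int, m * m = D).
Hypothesis rho_sqrt : forall k : nat, padic_ge p k%:Z (rho k ^+ 2 - D%:~R).
Hypothesis rho_cauchy_step : forall k : nat, padic_ge p k%:Z (rho k.+1 - rho k).
Variable rule : nat -> K -> rat.
Let alpha : K := (P%:~R / Q%:~R, 1 / Q%:~R).
Local Notation al n := (cf_alpha D rule alpha n).
Local Notation b n := (rule n (al n)).
Variable tstep : nat -> Prop.
Hypothesis b_tbar : forall n, tstep n -> b n = tbar p rho (al n).
Hypothesis b_sbar : forall n, ~ tstep n -> b n = sbar p rho (al n).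
Hypothesis tstep_after_sstep : forall n, ~ tstep n -> tstep n.+1.

Lemma Qr_neq0 : (Q%:~R : rat) != 0. Proof. by rewrite intr_eq0. Qed.

Lemma alpha_irrational : alpha.2 != 0.
Proof. by rewrite /= div1r invr_eq0 Qr_neq0. Qed.

Lemma al_y_neq0 n : (al n).2 != 0.
Proof. exact: cf_alpha_irrational D_nonsquare _ _ _ alpha_irrational. Qed.

(* [al n = (Pn n + sqrt (D Q^2)) / Qn n] *)
Definition Qn n : rat := Q%:~R / (al n).2.
Definition Pn n : rat := (al n).1 * Qn n.
Definition Rn n : rat := ((D * Q ^+ 2)%:~R - Pn n ^+ 2) / Qn n.

Lemma Qn_neq0 n : Qn n != 0.
Proof. by rewrite mulf_neq0 ?invr_eq0 ?al_y_neq0 ?Qr_neq0. Qed.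

Lemma cf_alphaE n : al n = (Pn n / Qn n, Q%:~R / Qn n).
Proof.
rewrite /Pn /Qn; move: (al_y_neq0 n); case: (al n) => x y /= y0.
by congr pair; field; rewrite y0 Qr_neq0.
Qed.

Lemma PnS n : Pn n.+1 = - ((al n).1 - b n) * Qn n.
Proof.
have y0 := al_y_neq0 n; have N0 := Knorm_neq0 D_nonsquare (z := Ksubq (al n) (b n)) y0.
by rewrite /Pn /Qn cf_alphaS Kinv1 Kinv2 /=; field; rewrite ?N0 ?y0 ?Qr_neq0.
Qed.

Lemma QnS n : Qn n.+1 = - ((al n).1 - b n) ^+ 2 * Qn n + (D * Q ^+ 2)%:~R / Qn n.
Proof.
have y0 := al_y_neq0 n; have N0 := Knorm_neq0 D_nonsquare (z := Ksubq (al n) (b n)) y0.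
rewrite /Qn cf_alphaS Kinv2 /Knorm /= rmorphM rmorphXn /=.
by field; rewrite ?N0 ?y0 ?Qr_neq0.
Qed.

Lemma Qn_QnS n : Qn n * Qn n.+1 = (D * Q ^+ 2)%:~R - Pn n.+1 ^+ 2.
Proof. by rewrite QnS PnS; field; rewrite Qn_neq0. Qed.

Lemma RnS n : Rn n.+1 = Qn n.
Proof. by rewrite /Rn -Qn_QnS mulfK ?Qn_neq0. Qed.

Lemma QnS_Rn n : Qn n.+1 = Rn n + (Pn n - Pn n.+1) * b n.
Proof. by rewrite QnS PnS /Rn /Pn; field; rewrite Qn_neq0. Qed.

Lemma Kin_pow_al_sub_b n : Kin_pow p rho 0 (Ksubq (al n) (b n)).
Proof.
have [/b_tbar ->|/b_sbar ->] := classic (tstep n); first exact: tbar_Kin_pow.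
exact: Kin_powW ler01 (sbar_Kin_pow p_prime _ _).
Qed.

Lemma b_in_Z1p n : in_Z1p p (b n).
Proof.
have [/b_tbar ->|/b_sbar ->] := classic (tstep n).
  exact: tbar_in_Z1p.
exact: sbar_in_Z1p.
Qed.

Lemma al_sub_b_le n : `|(al n).1 - b n| <= 3 / 2.
Proof.
have [/b_tbar ->|/b_sbar ->] := classic (tstep n).
  by apply: le_trans (tbar_near _ _ _) _; lra.
apply: le_trans (sbar_near p_prime _ _) _.
by rewrite ler_pdivrMr // (_ : 3 / 2 * 2 = 3%:R) ?ler_nat //; lra.
Qed.

Lemma al_sub_b_le_tstep n : tstep n -> `|(al n).1 - b n| <= 2^-1.
Proof. by move=> /b_tbar ->; apply: tbar_near. Qed.

Definition vq_y_bound : int := Num.max (vq p (1 / Q%:~R)) (inv_vq_bound p rho D).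

Lemma vq_y_le n : vq p (al n).2 <= vq_y_bound.
Proof.
elim: n => [|n IH]; first by rewrite /vq_y_bound le_max lexx.
rewrite cf_alphaS.
have := Kinv_vq_le p_prime D_nonsquare rho_sqrt (z := Ksubq (al n) (b n)) (al_y_neq0 n).
move=> /(_ (Kin_pow_al_sub_b n)) /le_trans; apply.
by rewrite ge_max IH /vq_y_bound le_max lexx orbT.
Qed.

Lemma PQR_in_Z1p n : [/\ in_Z1p p (Pn n), in_Z1p p (Qn n) & in_Z1p p (Rn n)].
Proof.
elim: n => [|n [hP hQ hR]].
  have Q0 := Qr_neq0.
  have P0E : Pn 0 = (P * Q)%:~R by rewrite /Pn /Qn /= rmorphM /=; field.
  have Q0E : Qn 0 = (Q * Q)%:~R by rewrite /Qn /= rmorphM /=; field.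
  have R0E : Rn 0 = (D - P ^+ 2)%:~R.
    by rewrite /Rn P0E Q0E !rmorphM rmorphB !rmorphM /=; field.
  by rewrite P0E Q0E R0E; split; apply: in_Z1p_int.
have hP' : in_Z1p p (Pn n.+1).
  rewrite PnS (_ : - _ * _ = b n * Qn n - Pn n); last by rewrite /Pn; ring.
  by apply: (in_Z1pB p_prime) => //; apply: (in_Z1pM p_prime) => //; apply: b_in_Z1p.
split => //; last by rewrite RnS.
rewrite QnS_Rn; apply: (in_Z1pD p_prime) => //.
by apply: (in_Z1pM p_prime); [apply: (in_Z1pB p_prime) | apply: b_in_Z1p].
Qed.

Definition den_exp : nat := `|vq_y_bound - vq p Q%:~R|%N.

Lemma Qn_int n : exists m : int, Qn n * p%:R ^+ den_exp = m%:~R.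
Proof.
have [_ hQ _] := PQR_in_Z1p n.
apply: (in_Z1p_scale p_prime hQ (Qn_neq0 n)).
rewrite /Qn vq_div ?al_y_neq0 ?Qr_neq0 //; have := vq_y_le n; rewrite /den_exp.
by move: (vq p (al n).2) (vq p Q%:~R) vq_y_bound => v w y; lia.
Qed.

Lemma Qn_ge n : 1 <= `|Qn n| * p%:R ^+ den_exp.
Proof.
have [m hm] := Qn_int n.
have m0 : m != 0.
  apply: contraNneq (Qn_neq0 n) => m0; move: hm; rewrite m0 mulr0z => /eqP.
  by rewrite mulf_eq0 (negbTE (pX_neq0 p_prime _)) orbF.
rewrite -(ger0_norm (ltW (pX_gt0 p_prime den_exp))) -normrM hm -intr_norm.
have : 1 <= `|m| by lia.
by rewrite -(ler_int rat).
Qed.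

Definition Qn_const : rat := `|(D * Q ^+ 2)%:~R| * p%:R ^+ den_exp.

Lemma QnS_le n : `|Qn n.+1| <= ((al n).1 - b n) ^+ 2 * `|Qn n| + Qn_const.
Proof.
rewrite QnS; apply: le_trans (ler_normD _ _) _.
rewrite normrM normrN normrX real_normK ?num_real // lerD2l.
have q_gt0 : 0 < `|Qn n| by rewrite normr_gt0 Qn_neq0.
rewrite normrM normfV ler_pdivrMr // /Qn_const -mulrA ler_peMr //.
by rewrite mulrC Qn_ge.
Qed.

Definition Qn_bound0 : rat := Num.max `|Qn 0| (3 * Qn_const).
Definition Qn_bound : rat := Qn_const + 9 / 4 * Qn_bound0.

(* A t-step shrinks [|Qn|] by a factor [1/4] and an s-step enlarges it by at
   most [9/4], up to the additive constant; s-steps are never consecutive. *)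
Lemma Qn_le_tstep n : `|Qn n| <= Qn_bound0 \/ (`|Qn n| <= Qn_bound /\ tstep n).
Proof.
have [u1 u2] : `|Qn 0| <= Qn_bound0 /\ 3 * Qn_const <= Qn_bound0.
  by rewrite /Qn_bound0 !le_max !lexx orbT.
have c0 : 0 <= Qn_const by rewrite mulr_ge0 // ltW // pX_gt0.
elim: n => [|n IH]; first by left.
have := QnS_le n; set c := (al n).1 - b n => hr.
have sqr_le (x : rat) : `|c| <= x -> c ^+ 2 * `|Qn n| <= x ^+ 2 * `|Qn n|.
  move=> cx; rewrite ler_wpM2r // -real_normK ?num_real //.
  by rewrite lerXn2r ?nnegrE ?(le_trans _ cx).
have [ht|hs] := classic (tstep n).
  have := sqr_le _ (al_sub_b_le_tstep ht); left.
  by case: IH => [h|[h _]]; rewrite /Qn_bound in h; lra.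
have := sqr_le _ (al_sub_b_le n); right; split; last exact: tstep_after_sstep.
by case: IH => [h|[_ /hs //]]; rewrite /Qn_bound; lra.
Qed.

Lemma Qn_le n : `|Qn n| <= Qn_bound.
Proof.
have c0 : 0 <= Qn_const by rewrite mulr_ge0 // ltW // pX_gt0.
have U0 : 0 <= Qn_bound0 by rewrite /Qn_bound0 le_max normr_ge0.
by case: (Qn_le_tstep n) => [h|[h _]] //; rewrite /Qn_bound; lra.
Qed.

Lemma PnS_le n : `|Pn n.+1| <= 3 / 2 * Qn_bound.
Proof.
by rewrite PnS normrM normrN; apply: ler_pM => //; [exact: al_sub_b_le | exact: Qn_le].
Qed.

Lemma PnS_int n : exists m : int, Pn n.+1 * p%:R ^+ den_exp = m%:~R.
Proof.
have [t ht] : exists t : int, p%:R ^+ den_exp = t%:~R :> rat.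
  by exists (p ^ den_exp)%N%:Z; rewrite -natrX.
have [a ha] := Qn_int n.+1; have [c hc] := Qn_int n; rewrite ht in ha hc *.
apply: (@rat_sqr_int _ (D * Q ^+ 2 * t ^+ 2 - c * a)).
rewrite exprMn (_ : Pn n.+1 ^+ 2 = (D * Q ^+ 2)%:~R - Qn n * Qn n.+1).
  by rewrite !rmorphB !rmorphM /= -ha -hc; ring.
by rewrite Qn_QnS; ring.
Qed.

Lemma cf_alpha_finite : exists s : seq K, forall n, (0 < n)%N -> al n \in s.
Proof.
move: PnS_int Qn_int (pX_gt0 p_prime den_exp).
move: (p%:R ^+ den_exp) => t P_int Q_int t_gt0.
set B := `|Num.ceil (3 / 2 * Qn_bound * t)|%N.
set rg := [seq i%:Z - B%:Z | i <- iota 0 (B + B).+1].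
have scaled_in x m : `|x| <= 3 / 2 * Qn_bound -> x * t = m%:~R -> m \in rg.
  move=> hx hm; apply/mem_int_range/absz_le_ceil.
  by rewrite -hm normrM (ger0_norm (ltW t_gt0)) ler_pM2r.
have W_ge0 : 0 <= Qn_bound := le_trans (normr_ge0 _) (Qn_le 0).
exists [seq (a%:~R / c%:~R, Q%:~R * t / c%:~R) | a <- rg, c <- rg].
case=> // n _; have [a ha] := P_int n; have [c hc] := Q_int n.+1.
have -> : al n.+1 = (a%:~R / c%:~R, Q%:~R * t / c%:~R).
  by rewrite cf_alphaE -ha -hc; congr pair; field; rewrite Qn_neq0 gt_eqF.
apply: allpairs_f; first exact: scaled_in (PnS_le n) ha.
by apply: scaled_in hc; apply: le_trans (Qn_le _) _; lra.
Qed.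

Lemma expansion_periodic (cls : nat -> bool) :
  (forall i j, (0 < i)%N -> (0 < j)%N -> cls i = cls j ->
     rule i =1 rule j /\ cls i.+1 = cls j.+1) ->
  ult_periodic_expansion D rule alpha.
Proof.
move=> cls_next; split => [n|].
  exact: cf_alpha_neq_b D_nonsquare _ _ _ alpha_irrational.
have [s al_in] := cf_alpha_finite.
have [N [k [k_gt0 per]]] := cf_b_periodic al_in cls_next.
by exists N, k.
Qed.

End BoundedExpansion.

Lemma ruleA_periodic p rho D P Q : prime p -> (p <= 3)%N -> Q != 0 ->
  ~ (exists m : int, m * m = D) ->
  (forall k : nat, padic_ge p k%:Z (rho k ^+ 2 - D%:~R)) ->
  (forall k : nat, padic_ge p k%:Z (rho k.+1 - rho k)) ->
  ult_periodic_expansion D (ruleA p rho) (P%:~R / Q%:~R, 1 / Q%:~R).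
Proof.
move=> p_prime p_le3 Q0 D_nonsquare rho_sqrt rho_cauchy_step; set alpha : K := (_, _).
pose tstep n := (0 < n)%N /\ Kvneg p rho (cf_alpha D (ruleA p rho) alpha n).
have b_tbar n : tstep n -> ruleA p rho n (cf_alpha D (ruleA p rho) alpha n) =
    tbar p rho (cf_alpha D (ruleA p rho) alpha n).
  by case: n => [[]//|n] [_ hv] /=; case: excluded_middle_informative.
have b_sbar n : ~ tstep n -> ruleA p rho n (cf_alpha D (ruleA p rho) alpha n) =
    sbar p rho (cf_alpha D (ruleA p rho) alpha n).
  case: n => [//|n] hs /=; case: excluded_middle_informative => // hv.
  by case: hs.
have after_s n : ~ tstep n -> tstep n.+1.
  move=> /b_sbar hs; split => //; rewrite cf_alphaS hs.
  apply: (Kinv_vneg p_prime D_nonsquare rho_sqrt); last exact: sbar_Kin_pow.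
  exact: cf_alpha_irrational D_nonsquare _ _ _ (alpha_irrational P Q0).
apply: (expansion_periodic p_prime p_le3 Q0 D_nonsquare rho_sqrt rho_cauchy_step
          b_tbar b_sbar after_s (cls := xpredT)).
by case=> [|i] [|j].
Qed.

Lemma ruleB_periodic p rho D P Q : prime p -> (p <= 3)%N -> Q != 0 ->
  ~ (exists m : int, m * m = D) ->
  (forall k : nat, padic_ge p k%:Z (rho k ^+ 2 - D%:~R)) ->
  (forall k : nat, padic_ge p k%:Z (rho k.+1 - rho k)) ->
  ult_periodic_expansion D (ruleB p rho) (P%:~R / Q%:~R, 1 / Q%:~R).
Proof.
move=> p_prime p_le3 Q0 D_nonsquare rho_sqrt rho_cauchy_step.
apply: (expansion_periodic p_prime p_le3 Q0 D_nonsquare rho_sqrt rho_cauchy_step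
          (tstep := fun n => odd n) _ _ _ (cls := odd)).
- by move=> n on; rewrite /ruleB on.
- by move=> n /negP /negbTE en; rewrite /ruleB en.
- by move=> n /negP /negbTE en /=; rewrite en.
- by move=> i j _ _ eij; split => [z|]; rewrite /ruleB /= eij.
Qed.

Theorem theorem2 (p : nat) (rho : nat -> rat) (D P Q : int) :
  (p = 2%N \/ p = 3%N) ->
  Q != 0 ->
  ~ (exists m : int, m * m = D) ->
  (* rho converges p-adically to a square root of D in Q_p *)
  (forall k : nat, padic_ge p k%:Z (rho k ^+ 2 - D%:~R)) ->
  (forall k : nat, padic_ge p k%:Z (rho k.+1 - rho k)) ->
  let alpha : K := (P%:~R / Q%:~R, 1 / Q%:~R) in
  ult_periodic_expansion D (ruleA p rho) alpha /\
  ult_periodic_expansion D (ruleB p rho) alpha.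
Proof.
move=> p23 Q0 D_nonsquare rho_sqrt rho_cauchy_step alpha.
have p_prime : prime p by case: p23 => ->.
have p_le3 : (p <= 3)%N by case: p23 => ->.
by split; [apply: ruleA_periodic | apply: ruleB_periodic].
Qed.
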